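(* Let $M$ be a multiplication $L$-module and define $\delta_2:M\to M$ by $\delta_2(A)=\bigwedge\{H\in M: A\leqslant H,\ H\text{ maximal in }M\}$ for proper $A\in M$ and $\delta_2(I_M)=I_M$. Then $\delta_2(A\wedge B)=\delta_2(A)\wedge\delta_2(B)$ for all $A,B\in M$.
   Context: $L$ is a multiplicative lattice (complete lattice with commutative, associative, join-distributive multiplication with identity $1$), compactly generated, $1$ compact, finite products of compact elements compact. An $L$-module is a complete lattice $M$ (least $O_M$, greatest $I_M$) with product $aB\in M$ satisfying $(\bigvee a_\alpha)A=\bigvee(a_\alpha A)$, $a(\bigvee A_\alpha)=\bigvee(aA_\alpha)$, $(ab)A=a(bA)$, $1A=A$, $0A=O_M$. $M$ is a multiplication module if every $N\in M$ equals $aI_M$ for some $a\in L$. Proper means $<I_M$; a proper $N$ is maximal if $N\leqslant B$ implies $B=N$ or $B=I_M$. The meet of the empty family is $I_M$. *)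

From Stdlib Require Import List ClassicalEpsilon.

Record cLattice := CLattice {
  cl_car :> Type;
  cl_le : cl_car -> cl_car -> Prop;
  cl_sup : (cl_car -> Prop) -> cl_car;
  cl_le_refl : forall x, cl_le x x;
  cl_le_trans : forall x y z, cl_le x y -> cl_le y z -> cl_le x z;
  cl_le_antisym : forall x y, cl_le x y -> cl_le y x -> x = y;
  cl_sup_ub : forall (S : cl_car -> Prop) x, S x -> cl_le x (cl_sup S);
  cl_sup_least : forall (S : cl_car -> Prop) y,
      (forall x, S x -> cl_le x y) -> cl_le (cl_sup S) y
}.

Arguments cl_le {c}.
Arguments cl_sup {c}.

Section LatOps.
Variable X : cLattice.
Definition cl_inf (S : X -> Prop) : X :=
  cl_sup (fun x => forall y, S y -> cl_le x y).
Definition cl_bot : X := cl_sup (fun _ => False).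
Definition cl_top : X := cl_sup (fun _ => True).
Definition cl_meet (a b : X) : X := cl_inf (fun y => y = a \/ y = b).
Definition cl_join (a b : X) : X := cl_sup (fun y => y = a \/ y = b).
End LatOps.

Arguments cl_inf {X}.
Arguments cl_bot {X}.
Arguments cl_top {X}.
Arguments cl_meet {X}.
Arguments cl_join {X}.

Definition compact {X : cLattice} (c : X) : Prop :=
  forall S : X -> Prop, cl_le c (cl_sup S) ->
    exists l : list X, (forall x, In x l -> S x) /\
                       cl_le c (cl_sup (fun x => In x l)).

(* Multiplicative lattice: 1 is the greatest element and the multiplicative
   identity (standard convention, Dilworth/Anderson). *)
Record mLattice := MLattice {
  ml_lat :> cLattice;
  ml_mul : ml_lat -> ml_lat -> ml_lat;
  ml_one : ml_lat;
  ml_one_top : ml_one = cl_top;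
  ml_mulC : forall a b, ml_mul a b = ml_mul b a;
  ml_mulA : forall a b c, ml_mul a (ml_mul b c) = ml_mul (ml_mul a b) c;
  ml_mul1 : forall a, ml_mul a ml_one = a;
  ml_mul_sup : forall a (S : ml_lat -> Prop),
      ml_mul a (cl_sup S) = cl_sup (fun y => exists s, S s /\ y = ml_mul a s);
  ml_compactly_generated : forall a : ml_lat,
      a = cl_sup (fun c => compact c /\ cl_le c a);
  ml_one_compact : compact ml_one;
  ml_mul_compact : forall a b, compact a -> compact b -> compact (ml_mul a b)
}.

Arguments ml_mul {m}.
Arguments ml_one {m}.

Record lModule (L : mLattice) := LModule {
  md_lat :> cLattice;
  md_act : L -> md_lat -> md_lat;
  md_act_supl : forall (S : L -> Prop) (A : md_lat),
      md_act (cl_sup S) A = cl_sup (fun y => exists a, S a /\ y = md_act a A);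
  md_act_supr : forall (a : L) (S : md_lat -> Prop),
      md_act a (cl_sup S) = cl_sup (fun y => exists B, S B /\ y = md_act a B);
  md_act_mul : forall (a b : L) (A : md_lat),
      md_act (ml_mul a b) A = md_act a (md_act b A);
  md_act_one : forall A : md_lat, md_act ml_one A = A;
  md_act_zero : forall A : md_lat, md_act cl_bot A = cl_bot
}.

Arguments md_act {L l}.

Definition multiplication_module {L : mLattice} (M : lModule L) : Prop :=
  forall N : M, exists a : L, N = md_act a cl_top.

Definition proper {X : cLattice} (N : X) : Prop := N <> cl_top.

Definition maximal {X : cLattice} (N : X) : Prop :=
  proper N /\ forall B : X, cl_le N B -> B = N \/ B = cl_top.

Definition delta2 {X : cLattice} (A : X) : X :=
  if excluded_middle_informative (A = cl_top) then cl_top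
  else cl_inf (fun H => cl_le A H /\ maximal H).

From Stdlib Require Import Classical ClassicalEpsilon.

(* The theorem follows from two facts.
   (1) Pure lattice theory: if every maximal element H of a complete lattice
       is prime for binary meets (A /\ B <= H implies A <= H or B <= H), then
       the maximal elements above A /\ B are exactly those above A together
       with those above B; since the infimum of a union of two families is
       the meet of their infima, delta2 commutes with binary meets.  The
       case where A or B is the top element is immediate, as delta2 fixes
       the top and the top is neutral for meets.
   (2) Module theory: in a multiplication module every maximal element is
       prime.  Write B = b I_M.  If A is not below the maximal H, then
       A \/ H = I_M, so B = b A \/ b H; here b A <= A /\ B <= H and
       b H <= H because b <= 1, hence B <= H. *)

Section CompleteLattice.
Variable X : cLattice.

Lemma inf_lb (S : X -> Prop) (y : X) : S y -> cl_le (cl_inf S) y.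
Proof. intro Hy. apply cl_sup_least. intros x Hx. exact (Hx y Hy). Qed.

Lemma inf_glb (S : X -> Prop) (x : X) :
  (forall y, S y -> cl_le x y) -> cl_le x (cl_inf S).
Proof. intro H. apply (cl_sup_ub X (fun x => forall y, S y -> cl_le x y)), H. Qed.

Lemma meet_lb_l (a b : X) : cl_le (cl_meet a b) a.
Proof. apply inf_lb; auto. Qed.

Lemma meet_lb_r (a b : X) : cl_le (cl_meet a b) b.
Proof. apply inf_lb; auto. Qed.

Lemma meet_glb (a b x : X) : cl_le x a -> cl_le x b -> cl_le x (cl_meet a b).
Proof. intros Ha Hb. apply inf_glb. intros y [-> | ->]; assumption. Qed.

Lemma join_ub_l (a b : X) : cl_le a (cl_join a b).
Proof. apply (cl_sup_ub X (fun y => y = a \/ y = b)); auto. Qed.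

Lemma join_ub_r (a b : X) : cl_le b (cl_join a b).
Proof. apply (cl_sup_ub X (fun y => y = a \/ y = b)); auto. Qed.

Lemma le_top (x : X) : cl_le x cl_top.
Proof. apply (cl_sup_ub X (fun _ => True)); exact I. Qed.

Lemma top_le (x : X) : cl_le cl_top x -> x = cl_top.
Proof. intro H. apply cl_le_antisym; [apply le_top | exact H]. Qed.

Lemma meet_top_l (x : X) : cl_meet cl_top x = x.
Proof.
  apply cl_le_antisym; [apply meet_lb_r |].
  apply meet_glb; [apply le_top | apply cl_le_refl].
Qed.

Lemma meet_top_r (x : X) : cl_meet x cl_top = x.
Proof.
  apply cl_le_antisym; [apply meet_lb_l |].
  apply meet_glb; [apply cl_le_refl | apply le_top].
Qed.

Lemma proper_le (x y : X) : cl_le x y -> proper y -> proper x.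
Proof. intros Hxy Hy ->. apply Hy, top_le, Hxy. Qed.

Lemma inf_union (S S1 S2 : X -> Prop) :
  (forall y, S y <-> S1 y \/ S2 y) ->
  cl_inf S = cl_meet (cl_inf S1) (cl_inf S2).
Proof.
  intro HS. apply cl_le_antisym.
  - apply meet_glb; apply inf_glb; intros y Hy; apply inf_lb, HS; auto.
  - apply inf_glb. intros y Hy. destruct (proj1 (HS y) Hy) as [H1 | H2].
    + apply (cl_le_trans _ _ _ _ (meet_lb_l _ _)), inf_lb, H1.
    + apply (cl_le_trans _ _ _ _ (meet_lb_r _ _)), inf_lb, H2.
Qed.

Lemma maximal_join_top (H x : X) :
  maximal H -> ~ cl_le x H -> cl_join x H = cl_top.
Proof.
  intros [_ Hmax] Hx. destruct (Hmax (cl_join x H) (join_ub_r _ _)) as [E | E].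
  - exfalso. apply Hx. rewrite <- E. apply join_ub_l.
  - exact E.
Qed.

Definition maximal_above (A H : X) : Prop := cl_le A H /\ maximal H.

Lemma delta2_top : delta2 (@cl_top X) = cl_top.
Proof. unfold delta2. destruct (excluded_middle_informative _); congruence. Qed.

Lemma delta2_proper (A : X) : proper A -> delta2 A = cl_inf (maximal_above A).
Proof. intro HA. unfold delta2. destruct (excluded_middle_informative _); [contradiction | reflexivity]. Qed.

Section PrimeMaximals.
Hypothesis maximal_prime : forall H A B : X,
  maximal H -> cl_le (cl_meet A B) H -> cl_le A H \/ cl_le B H.

Lemma maximal_above_meet (A B H : X) :
  maximal_above (cl_meet A B) H <-> maximal_above A H \/ maximal_above B H.
Proof.
  split.
  - intros [HAB Hmax]. destruct (maximal_prime H A B Hmax HAB); [left | right];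
      split; assumption.
  - intros [[HA Hmax] | [HB Hmax]]; split; try assumption.
    + exact (cl_le_trans _ _ _ _ (meet_lb_l A B) HA).
    + exact (cl_le_trans _ _ _ _ (meet_lb_r A B) HB).
Qed.

Lemma delta2_meet (A B : X) :
  delta2 (cl_meet A B) = cl_meet (delta2 A) (delta2 B).
Proof.
  destruct (classic (A = cl_top)) as [-> | nA].
  { rewrite !meet_top_l, delta2_top, meet_top_l. reflexivity. }
  destruct (classic (B = cl_top)) as [-> | nB].
  { rewrite !meet_top_r, delta2_top, meet_top_r. reflexivity. }
  assert (nAB : proper (cl_meet A B)) by exact (proper_le _ _ (meet_lb_l A B) nA).
  rewrite !delta2_proper by assumption.
  apply inf_union, maximal_above_meet.
Qed.
End PrimeMaximals.
End CompleteLattice.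

Section MultiplicationModule.
Variable L : mLattice.
Variable M : lModule L.

(* Every element of a complete lattice is the join of the elements below it;
   this lets the sup-preserving axioms of the action give monotonicity. *)
Lemma sup_below {X : cLattice} (x : X) : x = cl_sup (fun y => cl_le y x).
Proof.
  apply cl_le_antisym.
  - apply (cl_sup_ub _ (fun y => cl_le y x)), cl_le_refl.
  - apply cl_sup_least; auto.
Qed.

Lemma act_mono_r (a : L) (A B : M) : cl_le A B -> cl_le (md_act a A) (md_act a B).
Proof.
  intro HAB. rewrite (sup_below B), md_act_supr.
  apply (cl_sup_ub _ (fun y => exists C, cl_le C B /\ y = md_act a C)). eauto.
Qed.

Lemma act_mono_l (a b : L) (A : M) : cl_le a b -> cl_le (md_act a A) (md_act b A).
Proof.
  intro Hab. rewrite (sup_below b), md_act_supl.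
  apply (cl_sup_ub _ (fun y => exists c, cl_le c b /\ y = md_act c A)). eauto.
Qed.

(* Acting shrinks: a A <= 1 A = A, since 1 is the top of L. *)
Lemma act_le (a : L) (A : M) : cl_le (md_act a A) A.
Proof.
  rewrite <- (md_act_one L M A) at 2.
  apply act_mono_l. rewrite ml_one_top. apply le_top.
Qed.

Lemma act_join_le (a : L) (A B C : M) :
  cl_le (md_act a A) C -> cl_le (md_act a B) C -> cl_le (md_act a (cl_join A B)) C.
Proof.
  intros HA HB. unfold cl_join. rewrite md_act_supr.
  apply cl_sup_least. intros y [D [[-> | ->] ->]]; assumption.
Qed.

Lemma multiplication_maximal_prime (mm : multiplication_module M) (H A B : M) :
  maximal H -> cl_le (cl_meet A B) H -> cl_le A H \/ cl_le B H.
Proof.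
  intros Hmax HAB. destruct (classic (cl_le A H)) as [HA | nHA]; [left; exact HA | right].
  destruct (mm B) as [b EB].
  assert (bA_le : cl_le (md_act b A) H).
  { eapply cl_le_trans; [| exact HAB].
    apply meet_glb; [apply act_le |].
    rewrite EB. apply act_mono_r, le_top. }
  rewrite EB, <- (maximal_join_top _ H A Hmax nHA).
  apply act_join_le; [exact bA_le | apply act_le].
Qed.
End MultiplicationModule.

Theorem theorem3p7 (L : mLattice) (M : lModule L) :
  multiplication_module M ->
  forall A B : M, delta2 (cl_meet A B) = cl_meet (delta2 A) (delta2 B).
Proof.
  intros mm A B.
  apply delta2_meet.
  exact (multiplication_maximal_prime L M mm).
Qed.
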